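(* Let $a\in\mathbb Z^3$ and $A,N\ge1$ with $|a|\sim A$. Then for either choice of sign $\pm$, $$\sup_{m\in\mathbb Z}\#\{n\in\mathbb Z^3:|n|\sim N,\ |\langle a+n\rangle\pm\langle n\rangle-m|\lesssim1\}\lesssim\min(A,N)^{-1}N^3.$$
   Context: $\langle n\rangle=(1+|n|^2)^{1/2}$. ''$|x|\sim N$'' means $c^{-1}N\le|x|\le cN$ for a fixed absolute constant $c$ (and $|x|\le c$ when the scale is $1$); ''$\lesssim1$'' inside the set means bounded by a fixed absolute constant. Implicit constants are absolute. *)

From Stdlib Require Import Reals Lra Lia ZArith List.
Open Scope R_scope.

Definition Z3 : Type := (Z * Z * Z)%type.

Definition z3add (a n : Z3) : Z3 :=
  match a, n with (a1, a2, a3), (n1, n2, n3) => ((a1 + n1)%Z, (a2 + n2)%Z, (a3 + n3)%Z) end.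

Definition z3norm (n : Z3) : R :=
  match n with (n1, n2, n3) => sqrt (IZR n1 ^ 2 + IZR n2 ^ 2 + IZR n3 ^ 2) end.

Definition jbr (n : Z3) : R := sqrt (1 + z3norm n ^ 2).

Definition sim (c x N : R) : Prop :=
  (N = 1 -> x <= c) /\ (N <> 1 -> / c * N <= x <= c * N).

(* "#S <= K": every duplicate-free list of elements of S has length at most K. *)
Definition card_le (S : Z3 -> Prop) (K : R) : Prop :=
  forall l : list Z3, NoDup l -> (forall n, In n l -> S n) -> INR (length l) <= K.

From Stdlib Require Import Reals List Lra Lia ZArith Psatz.
Open Scope R_scope.

(* On the shell [j <= |n| <= j + 1] the bracket <n> moves by at most 1, so the level-set
   condition confines <a + n> to a window of width 2c' + 1 and, through
   |a + n|^2 = |a|^2 + 2 a.n + |n|^2, confines a.n to a slab of width W = O((1 + c')(|a| + j)).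
   Dividing by the dominant coordinate of a, the slab becomes t <= n3 + b1 n1 + b2 n2 <= t + L
   with |b2| <= 1 and L <= 2 W / |a|; on each unit sub-slab n3 is a function of (n1, n2), and the
   shell becomes a lattice annulus of width O(j) for a positive quadratic form, which holds
   O(j) points (its columns have widths summing like sum_k k^(-1/2)).  Hence each shell holds
   O((1 + W / |a|) j) points, and the O(N) shells hold O(N^2 (1 + N / |a|)) = O(N^3 / min(A, N))
   points.  When A = 1 the trivial O(N^3) bound for the ball suffices. *)

(** * Bounds on the number of elements of a set *)

(* [card_le] is the instance [T := Z3] of [card_at_most]. *)
Definition card_at_most {T : Type} (P : T -> Prop) (K : R) : Prop :=
  forall l : list T, NoDup l -> (forall x, In x l -> P x) -> INR (length l) <= K.

Section Counting.

Context {T : Type}.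
Implicit Types (P : T -> Prop) (K : R).

Lemma card_at_most_weaken P P' K K' :
  (forall x, P x -> P' x) -> K' <= K -> card_at_most P' K' -> card_at_most P K.
Proof. intros HP HK H l Hl Hin. apply Rle_trans with K'; auto. Qed.

Lemma card_at_most_nonneg P K : card_at_most P K -> 0 <= K.
Proof. intros H. apply (H nil); [constructor | intros x []]. Qed.

Lemma card_at_most_empty P K : 0 <= K -> (forall x, ~ P x) -> card_at_most P K.
Proof.
  intros HK HP [|x l] _ Hin; [exact HK|].
  exfalso. apply (HP x), Hin. now left.
Qed.

Lemma card_at_most_subsingleton P : (forall x y, P x -> P y -> x = y) -> card_at_most P 1.
Proof.
  intros HP [|x [|y l]] Hl Hin; simpl; try lra.
  exfalso. inversion Hl as [|? ? Hx]. apply Hx. left.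
  apply HP; apply Hin; simpl; auto.
Qed.

Lemma card_at_most_inj {U : Type} P (P' : U -> Prop) (f : T -> U) K :
  (forall x, P x -> P' (f x)) -> (forall x y, P x -> P y -> f x = f y -> x = y) ->
  card_at_most P' K -> card_at_most P K.
Proof.
  intros Hmap Hinj H l Hl Hin. rewrite <- (length_map f). apply H.
  - apply NoDup_map_NoDup_ForallPairs; auto. intros x y Hx Hy. auto.
  - intros y Hy. apply in_map_iff in Hy as [x [<- Hx]]. auto.
Qed.

Lemma card_at_most_split P (Q : T -> Prop) (Qdec : forall x, {Q x} + {~ Q x}) K1 K2 :
  card_at_most (fun x => P x /\ Q x) K1 -> card_at_most (fun x => P x /\ ~ Q x) K2 ->
  card_at_most P (K1 + K2).
Proof.
  intros H1 H2 l Hl Hin.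
  set (q := fun x => if Qdec x then true else false).
  rewrite <- (filter_length q l), plus_INR.
  apply Rplus_le_compat; [apply H1 | apply H2]; try apply NoDup_filter; auto;
    intros x Hx; apply filter_In in Hx as [Hx Hq]; unfold q in Hq;
    destruct (Qdec x); simpl in Hq; try discriminate; auto.
Qed.

(* [sum_f_R0 B M] has [M + 1] terms, one for each value of the key. *)
Lemma card_at_most_fibers P (key : T -> Z) (lo : Z) (M : nat) (B : nat -> R) :
  (forall x, P x -> (lo <= key x <= lo + Z.of_nat M)%Z) ->
  (forall j, (j <= M)%nat -> card_at_most (fun x => P x /\ key x = (lo + Z.of_nat j)%Z) (B j)) ->
  card_at_most P (sum_f_R0 B M).
Proof.
  revert P; induction M as [|M IH]; intros P Hrange Hfib.
  - apply card_at_most_weaken with (2 := Rle_refl _) (3 := Hfib 0%nat (le_n 0)).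
    intros x Hx. split; auto. specialize (Hrange x Hx). lia.
  - simpl sum_f_R0. rewrite Rplus_comm.
    apply (card_at_most_split _ (fun x => key x = (lo + Z.of_nat (S M))%Z)
             (fun x => Z.eq_dec _ _)).
    + now apply Hfib.
    + apply IH.
      * intros x [Hx Hk]. specialize (Hrange x Hx). lia.
      * intros j Hj. apply card_at_most_weaken with (2 := Rle_refl _) (3 := Hfib j ltac:(lia)).
        intros x [[Hx _] Hk]. auto.
Qed.

End Counting.

Lemma Rabs_le_between x e : Rabs x <= e -> - e <= x <= e.
Proof. unfold Rabs. destruct (Rcase_abs x); lra. Qed.

Lemma Rdiv_nonneg x y : 0 <= x -> 0 < y -> 0 <= x / y.
Proof. intros Hx Hy. apply Rmult_le_pos; [assumption | apply Rlt_le, Rinv_0_lt_compat, Hy]. Qed.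

Lemma Rdiv_le_iff x y z : 0 < z -> x / z <= y <-> x <= y * z.
Proof.
  intros Hz. split; intros H.
  - apply Rmult_le_compat_r with (r := z) in H; [|lra].
    unfold Rdiv in H. rewrite Rmult_assoc, Rinv_l, Rmult_1_r in H by lra. exact H.
  - apply Rmult_le_reg_r with z; [assumption|].
    unfold Rdiv. rewrite Rmult_assoc, Rinv_l, Rmult_1_r by lra. exact H.
Qed.

Lemma Rle_div_iff x y z : 0 < z -> x <= y / z <-> x * z <= y.
Proof.
  intros Hz. split; intros H.
  - apply Rmult_le_compat_r with (r := z) in H; [|lra].
    unfold Rdiv in H. rewrite Rmult_assoc, Rinv_l, Rmult_1_r in H by lra. exact H.
  - apply Rmult_le_reg_r with z; [assumption|].
    unfold Rdiv. rewrite Rmult_assoc, Rinv_l, Rmult_1_r by lra. exact H.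
Qed.

Lemma sqrt_le_of_le_sq x y : 0 <= y -> x <= y ^ 2 -> sqrt x <= y.
Proof. intros Hy H. rewrite <- (sqrt_pow2 y Hy). now apply sqrt_le_1_alt. Qed.

Lemma le_sqrt_of_sq_le x y : 0 <= y -> y ^ 2 <= x -> y <= sqrt x.
Proof. intros Hy H. rewrite <- (sqrt_pow2 y Hy). now apply sqrt_le_1_alt. Qed.

Lemma sqrt_le_abs_le_sqrt d X1 X2 : X1 <= d ^ 2 <= X2 -> sqrt X1 <= Rabs d <= sqrt X2.
Proof.
  intros [H1 H2]. rewrite <- pow2_abs in H1, H2.
  rewrite <- (sqrt_pow2 (Rabs d)) by apply Rabs_pos.
  split; now apply sqrt_le_1_alt.
Qed.

Lemma Int_part_le x : IZR (Int_part x) <= x.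
Proof. apply base_Int_part. Qed.

Lemma lt_Int_part_add1 x : x < IZR (Int_part x) + 1.
Proof. pose proof (base_Int_part x). lra. Qed.

Lemma le_Int_part (z : Z) x : IZR z <= x -> (z <= Int_part x)%Z.
Proof.
  intros H. pose proof (lt_Int_part_add1 x).
  assert (IZR z < IZR (Int_part x + 1)) by (rewrite plus_IZR; lra).
  apply lt_IZR in H1. lia.
Qed.

Lemma Int_part_eq_of_nat x (j : nat) : Int_part x = Z.of_nat j -> INR j <= x < INR j + 1.
Proof.
  intros H. rewrite INR_IZR_INZ, <- H. split; [apply Int_part_le | apply lt_Int_part_add1].
Qed.

Definition Int_ceil (x : R) : Z := (- Int_part (- x))%Z.

Lemma Int_ceil_ge x : x <= IZR (Int_ceil x).
Proof. unfold Int_ceil. rewrite opp_IZR. pose proof (Int_part_le (- x)). lra. Qed.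

Lemma Int_ceil_le (z : Z) x : x <= IZR z -> (Int_ceil x <= z)%Z.
Proof.
  intros H. unfold Int_ceil.
  assert (IZR (- z) <= - x) by (rewrite opp_IZR; lra).
  apply le_Int_part in H0. lia.
Qed.

Lemma Z_eq_of_dist_lt_1 (z z' : Z) : -1 < IZR z - IZR z' < 1 -> z = z'.
Proof.
  rewrite <- minus_IZR. intros [H1 H2].
  apply lt_IZR in H1. apply lt_IZR in H2. lia.
Qed.

Lemma card_at_most_Z_interval x y :
  x <= y -> card_at_most (fun v : Z => x <= IZR v <= y) (y - x + 1).
Proof.
  intros Hxy.
  destruct (Z_lt_le_dec (Int_part y) (Int_ceil x)) as [Hempty | Hlohi].
  { apply card_at_most_empty; [lra|]. intros v [Hx Hy].
    apply Int_ceil_le in Hx. apply le_Int_part in Hy. lia. }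
  set (M := Z.to_nat (Int_part y - Int_ceil x)).
  eapply card_at_most_weaken; [intros v Hv; exact Hv | |].
  2:{ apply (card_at_most_fibers _ (fun v => v) (Int_ceil x) M (fun _ => 1)).
      - intros v [Hx Hy]. apply Int_ceil_le in Hx. apply le_Int_part in Hy. unfold M. lia.
      - intros j _. apply card_at_most_subsingleton. intros v v' [_ ->] [_ ->]. reflexivity. }
  rewrite sum_cte, Rmult_1_l, S_INR, INR_IZR_INZ.
  unfold M. rewrite Z2Nat.id, minus_IZR by lia.
  pose proof (Int_ceil_ge x). pose proof (Int_part_le y). lra.
Qed.

Lemma card_at_most_Z_sq_window c X1 X2 :
  X1 <= X2 ->
  card_at_most (fun v : Z => X1 <= (IZR v - c) ^ 2 <= X2) (2 * (sqrt X2 - sqrt X1) + 2).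
Proof.
  intros H12. pose proof (sqrt_le_1_alt _ _ H12).
  replace (2 * (sqrt X2 - sqrt X1) + 2)
    with ((c + sqrt X2 - (c + sqrt X1) + 1) + (c - sqrt X1 - (c - sqrt X2) + 1)) by ring.
  apply (card_at_most_split _ (fun v => c <= IZR v) (fun v => Rle_dec c (IZR v)));
    (eapply card_at_most_weaken; [| apply Rle_refl | apply card_at_most_Z_interval; lra]);
    intros v [Hv Hc]; apply sqrt_le_abs_le_sqrt in Hv.
  - rewrite Rabs_right in Hv by lra. lra.
  - rewrite Rabs_left in Hv by lra. lra.
Qed.

(** * Lattice points in an elliptic annulus *)

Lemma sum_f_R0_rev (f : nat -> R) (M : nat) :
  sum_f_R0 (fun j => f (M - j)%nat) M = sum_f_R0 f M.
Proof.
  induction M as [|M IH]; [reflexivity|].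
  rewrite decomp_sum, tech5 by lia. simpl pred. rewrite Nat.sub_0_r.
  rewrite (sum_eq _ (fun j => f (M - j)%nat)) by reflexivity.
  rewrite IH. ring.
Qed.

Lemma sum_inv_sqrt_le n : sum_f_R0 (fun i => / sqrt (INR (S i))) n <= 2 * sqrt (INR (S n)).
Proof.
  induction n as [|n IH].
  - simpl. rewrite sqrt_1. lra.
  - rewrite tech5.
    set (x := sqrt (INR (S n))) in *. set (y := sqrt (INR (S (S n)))).
    assert (Hx : 0 <= x) by apply sqrt_pos.
    assert (Hy : 0 < y) by (apply sqrt_lt_R0, lt_0_INR; lia).
    assert (Hxy : y * y = x * x + 1).
    { unfold x, y. rewrite !sqrt_sqrt by apply pos_INR. rewrite (S_INR (S n)). ring. }
    (* [/ y <= 2 (y - x)] since [2 y (y - x) >= (y + x) (y - x) = 1] *)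
    assert (/ y <= 2 * (y - x)).
    { apply Rmult_le_reg_l with y; [lra|]. rewrite Rinv_r by lra. nra. }
    lra.
Qed.

Lemma sqrt_sub_le_sqrt_sub X1 X2 : X1 <= X2 -> sqrt X2 - sqrt X1 <= sqrt (X2 - X1).
Proof.
  intros H. destruct (Rle_dec X1 0) as [Hneg | Hpos].
  - rewrite (sqrt_neg_0 X1 Hneg). pose proof (sqrt_le_1_alt X2 (X2 - X1)). lra.
  - pose proof (sqrt_pos X1). pose proof (sqrt_pos (X2 - X1)).
    pose proof (sqrt_sqrt X1 ltac:(lra)). pose proof (sqrt_sqrt (X2 - X1) ltac:(lra)).
    assert (sqrt X2 <= sqrt X1 + sqrt (X2 - X1)); [|lra].
    apply sqrt_le_of_le_sq; nra.
Qed.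

Lemma sqrt_sub_le_div X1 X2 : X1 <= X2 -> 0 < X2 -> sqrt X2 - sqrt X1 <= (X2 - X1) / sqrt X2.
Proof.
  intros H H2. pose proof (sqrt_lt_R0 X2 H2). pose proof (sqrt_sqrt X2 ltac:(lra)).
  assert (X1 <= sqrt X1 * sqrt X2).
  { destruct (Rle_dec X1 0); [pose proof (sqrt_pos X1); nra|].
    pose proof (sqrt_sqrt X1 ltac:(lra)). pose proof (sqrt_le_1_alt _ _ H).
    pose proof (sqrt_pos X1). nra. }
  apply Rle_div_iff; [assumption | nra].
Qed.

(* Bound for the width [sqrt X2 - sqrt X1] of the column of an annulus of thickness [D]
   around a disc of radius [rho], at lattice distance [d] from the rim of the disc; [d = 0]
   is apart since [/ 0 = 0]. *)
Definition gap_bound (D rho : R) (d : nat) : R :=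
  match d with O => sqrt D | S _ => D * sqrt (2 / rho) / sqrt (INR d) end.

Lemma gap_bound_nonneg D rho d : 0 <= D -> 0 <= gap_bound D rho d.
Proof.
  intros HD. destruct d as [|k]; unfold gap_bound; [apply sqrt_pos|].
  apply Rdiv_nonneg; [apply Rmult_le_pos; [assumption | apply sqrt_pos]|].
  apply sqrt_lt_R0, lt_0_INR. lia.
Qed.

Lemma sqrt_sub_le_gap_bound X1 X2 D rho d :
  0 <= X2 - X1 <= D -> INR d <= rho -> rho * INR d <= 2 * X2 ->
  sqrt X2 - sqrt X1 <= gap_bound D rho d.
Proof.
  intros HD Hd Hrho. destruct d as [|k]; unfold gap_bound.
  - pose proof (sqrt_sub_le_sqrt_sub X1 X2 ltac:(lra)).
    pose proof (sqrt_le_1_alt (X2 - X1) D ltac:(lra)). lra.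
  - set (d := INR (S k)) in *.
    assert (Hd1 : 1 <= d) by (unfold d; rewrite S_INR; pose proof (pos_INR k); lra).
    assert (HX2 : 0 < X2) by nra.
    apply Rle_trans with ((X2 - X1) / sqrt X2); [now apply sqrt_sub_le_div; lra|].
    apply Rle_trans with (D * sqrt (/ X2)).
    { rewrite sqrt_inv. apply Rmult_le_compat_r; [|lra].
      apply Rlt_le, Rinv_0_lt_compat, sqrt_lt_R0, HX2. }
    unfold Rdiv. rewrite Rmult_assoc, <- sqrt_inv, <- sqrt_mult_alt.
    2:{ apply Rlt_le, Rmult_lt_0_compat; [lra | apply Rinv_0_lt_compat; lra]. }
    apply Rmult_le_compat_l; [lra|]. apply sqrt_le_1_alt.
    replace (2 * / rho * / d) with (/ (rho * d / 2)) by (field; lra).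
    apply Rinv_le_contravar; nra.
Qed.

Lemma sum_gap_bound_le D rho M :
  0 <= D -> INR M <= 2 * rho -> sum_f_R0 (gap_bound D rho) M <= sqrt D + 4 * D.
Proof.
  intros HD HM. destruct M as [|M]; [simpl; lra|].
  rewrite decomp_sum by lia. simpl pred. simpl gap_bound at 1.
  assert (Hrho : 0 < rho) by (rewrite S_INR in HM; pose proof (pos_INR M); lra).
  rewrite (sum_eq _ (fun i => / sqrt (INR (S i)) * (D * sqrt (2 / rho))))
    by (intros; unfold gap_bound, Rdiv; ring).
  rewrite <- scal_sum.
  pose proof (sum_inv_sqrt_le M).
  assert (0 <= D * sqrt (2 / rho)) by (apply Rmult_le_pos; [lra | apply sqrt_pos]).
  assert (sqrt (2 / rho) * sqrt (INR (S M)) <= 2).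
  { rewrite <- sqrt_mult_alt by (apply Rdiv_nonneg; lra).
    apply sqrt_le_of_le_sq; [lra|]. apply Rmult_le_reg_l with rho; [lra|].
    field_simplify; lra. }
  nra.
Qed.

Section ShearedAnnulus.

Variables (alpha mu u0 Lo Up : R) (beta : R -> R).
Hypotheses (Halpha : 1 <= alpha) (Halpha_mu : alpha <= 2 * mu) (HLU : Lo <= Up).

Definition sheared_annulus (w : Z * Z) : Prop :=
  Lo <= alpha * (IZR (snd w) - beta (IZR (fst w))) ^ 2 + mu * (IZR (fst w) - u0) ^ 2 <= Up.

Lemma card_at_most_annulus_column (rho b : R) (u : Z) (j k : nat) :
  0 <= rho -> mu * rho ^ 2 = Up ->
  INR j <= IZR u - (u0 - rho) -> INR k <= u0 + rho - IZR u ->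
  card_at_most (fun v : Z => Lo <= alpha * (IZR v - b) ^ 2 + mu * (IZR u - u0) ^ 2 <= Up)
    (2 * (gap_bound (Up - Lo) rho j + gap_bound (Up - Lo) rho k) + 2).
Proof.
  intros Hrho HUp Hj Hk.
  set (t := IZR u - u0).
  set (X1 := (Lo - mu * t ^ 2) / alpha). set (X2 := (Up - mu * t ^ 2) / alpha).
  assert (Hwin : forall v : Z, Lo <= alpha * (IZR v - b) ^ 2 + mu * t ^ 2 <= Up ->
                 X1 <= (IZR v - b) ^ 2 <= X2).
  { intros v Hv. unfold X1, X2.
    rewrite Rdiv_le_iff, Rle_div_iff by lra. lra. }
  assert (HX : 0 <= X2 - X1 <= Up - Lo).
  { replace (X2 - X1) with ((Up - Lo) / alpha) by (unfold X1, X2; field; lra).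
    rewrite Rdiv_le_iff by lra. split; [apply Rdiv_nonneg |]; nra. }
  (* A lattice distance [d] from [u] to the rim of the disc [|t| <= rho] gives
     [rho d <= rho^2 - t^2 <= 2 X2]. *)
  assert (Hcol : forall d : nat,
            INR d + Rabs t <= rho -> sqrt X2 - sqrt X1 <= gap_bound (Up - Lo) rho d).
  { intros d Hd. pose proof (pos_INR d). pose proof (Rabs_pos t).
    apply sqrt_sub_le_gap_bound; [assumption | lra|].
    assert (Hrt : rho * INR d <= rho ^ 2 - t ^ 2) by (rewrite <- (pow2_abs t); nra).
    replace (2 * X2) with (2 * mu / alpha * (rho ^ 2 - t ^ 2))
      by (unfold X2; rewrite <- HUp; field; lra).
    assert (1 <= 2 * mu / alpha) by (apply Rle_div_iff; lra).
    assert (0 <= (2 * mu / alpha - 1) * (rho ^ 2 - t ^ 2)) by (apply Rmult_le_pos; nra).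
    nra. }
  pose proof (gap_bound_nonneg (Up - Lo) rho j ltac:(lra)).
  pose proof (gap_bound_nonneg (Up - Lo) rho k ltac:(lra)).
  eapply card_at_most_weaken; [exact Hwin | | apply card_at_most_Z_sq_window; lra].
  destruct (Rle_dec (IZR u) u0).
  - assert (sqrt X2 - sqrt X1 <= gap_bound (Up - Lo) rho j)
      by (apply Hcol; rewrite Rabs_left1 by (unfold t; lra); unfold t; lra).
    lra.
  - assert (sqrt X2 - sqrt X1 <= gap_bound (Up - Lo) rho k)
      by (apply Hcol; rewrite Rabs_right by (unfold t; lra); unfold t; lra).
    lra.
Qed.

Lemma card_at_most_sheared_annulus_radius rho :
  0 <= rho -> mu * rho ^ 2 = Up ->
  card_at_most sheared_annulus (16 * (Up - Lo) + 4 * sqrt (Up - Lo) + 4 * rho + 2).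
Proof.
  intros Hrho HUp. set (D := Up - Lo).
  assert (HD : 0 <= D) by (unfold D; lra).
  assert (Hdisc : forall w, sheared_annulus w -> u0 - rho <= IZR (fst w) <= u0 + rho).
  { intros w Hw. unfold sheared_annulus in Hw.
    assert (0 <= alpha * (IZR (snd w) - beta (IZR (fst w))) ^ 2)
      by (apply Rmult_le_pos; [lra | apply pow2_ge_0]).
    assert ((IZR (fst w) - u0) ^ 2 <= rho ^ 2) by nra.
    split; nra. }
  set (lo := Int_ceil (u0 - rho)). set (hi := Int_part (u0 + rho)).
  destruct (Z_lt_le_dec hi lo) as [Hempty | Hlohi].
  { apply card_at_most_empty; [pose proof (sqrt_pos D); lra|].
    intros w Hw. destruct (Hdisc w Hw) as [H1 H2].
    apply Int_ceil_le in H1. apply le_Int_part in H2. fold lo in H1. fold hi in H2. lia. }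
  set (M := Z.to_nat (hi - lo)).
  assert (HM : INR M = IZR hi - IZR lo)
    by (unfold M; rewrite INR_IZR_INZ, Z2Nat.id, minus_IZR by lia; reflexivity).
  assert (Hlo : u0 - rho <= IZR lo) by apply Int_ceil_ge.
  assert (Hhi : IZR hi <= u0 + rho) by apply Int_part_le.
  set (g := gap_bound D rho).
  eapply card_at_most_weaken; [intros w Hw; exact Hw | |].
  2:{ apply (card_at_most_fibers _ fst lo M (fun j => 2 * (g j + g (M - j)%nat) + 2)).
      - intros w Hw. destruct (Hdisc w Hw) as [H1 H2].
        apply Int_ceil_le in H1. apply le_Int_part in H2. unfold M. lia.
      - intros j Hj. set (u := (lo + Z.of_nat j)%Z).
        apply (card_at_most_inj _ (fun v : Z =>
                 Lo <= alpha * (IZR v - beta (IZR u)) ^ 2 + mu * (IZR u - u0) ^ 2 <= Up) snd).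
        + intros w [Hw Hk]. unfold sheared_annulus in Hw. rewrite Hk in Hw. exact Hw.
        + intros [x1 x2] [y1 y2] [_ Hx] [_ Hy] E. simpl in *. congruence.
        + apply card_at_most_annulus_column; [assumption .. | |];
            unfold u; rewrite plus_IZR, <- INR_IZR_INZ; [lra|].
          rewrite minus_INR by assumption. lra. }
  apply Rle_trans with
    (2 * sum_f_R0 g M + 2 * sum_f_R0 (fun j => g (M - j)%nat) M + sum_f_R0 (fun _ => 2) M).
  { right. rewrite !scal_sum, <- !plus_sum. apply sum_eq. intros. ring. }
  rewrite sum_f_R0_rev, sum_cte, S_INR.
  pose proof (sum_gap_bound_le D rho M HD ltac:(lra)) as Hsum. fold g in Hsum.
  lra.
Qed.

Lemma card_at_most_sheared_annulus :
  1 <= mu ->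
  card_at_most sheared_annulus (16 * (Up - Lo) + 4 * sqrt (Up - Lo) + 4 * sqrt Up + 2).
Proof.
  intros Hmu. pose proof (sqrt_pos (Up - Lo)). pose proof (sqrt_pos Up).
  destruct (Rlt_dec Up 0) as [Hneg | HUp0].
  { apply card_at_most_empty; [lra|]. intros w Hw. unfold sheared_annulus in Hw.
    assert (0 <= alpha * (IZR (snd w) - beta (IZR (fst w))) ^ 2)
      by (apply Rmult_le_pos; [lra | apply pow2_ge_0]).
    assert (0 <= mu * (IZR (fst w) - u0) ^ 2) by (apply Rmult_le_pos; [lra | apply pow2_ge_0]).
    lra. }
  assert (HUmu : 0 <= Up / mu) by (apply Rdiv_nonneg; lra).
  eapply card_at_most_weaken; [intros w Hw; exact Hw | |
    apply (card_at_most_sheared_annulus_radius (sqrt (Up / mu))); [apply sqrt_pos |]].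
  - enough (sqrt (Up / mu) <= sqrt Up) by lra.
    apply sqrt_le_1_alt. apply Rdiv_le_iff; nra.
  - rewrite pow2_sqrt by lra. field. lra.
Qed.

End ShearedAnnulus.

Lemma card_at_most_ellipse_annulus b1 b2 k Lo Up :
  -1 <= b2 <= 1 -> Lo <= Up ->
  card_at_most (fun w : Z * Z =>
      Lo <= IZR (fst w) ^ 2 + IZR (snd w) ^ 2 + (k - b1 * IZR (fst w) - b2 * IZR (snd w)) ^ 2
      <= Up)
    (16 * (Up - Lo) + 4 * sqrt (Up - Lo) + 4 * sqrt Up + 2).
Proof.
  intros Hb2 HLU.
  set (alpha := 1 + b2 ^ 2). set (sigma := 1 + b1 ^ 2 + b2 ^ 2).
  set (mu := sigma / alpha). set (m0 := k ^ 2 / sigma).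
  assert (Halpha : 1 <= alpha <= 2) by (unfold alpha; nra).
  assert (Hsigma : alpha <= sigma) by (unfold alpha, sigma; nra).
  assert (Hmu : 1 <= mu) by (apply Rle_div_iff; lra).
  assert (Hm0 : 0 <= m0) by (apply Rdiv_nonneg; [apply pow2_ge_0 | lra]).
  assert (Hsquare : forall u v, u ^ 2 + v ^ 2 + (k - b1 * u - b2 * v) ^ 2 =
      alpha * (v - b2 * (k - b1 * u) / alpha) ^ 2 + mu * (u - k * b1 / sigma) ^ 2 + m0).
  { intros u v. unfold mu, m0, sigma, alpha. field. split; nra. }
  eapply card_at_most_weaken;
    [| | apply (card_at_most_sheared_annulus alpha mu (k * b1 / sigma) (Lo - m0) (Up - m0)
                 (fun u => b2 * (k - b1 * u) / alpha)); lra].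
  - intros w Hw. unfold sheared_annulus. rewrite Hsquare in Hw. lra.
  - replace (Up - m0 - (Lo - m0)) with (Up - Lo) by ring.
    pose proof (sqrt_le_1_alt (Up - m0) Up ltac:(lra)). lra.
Qed.

(** * Lattice points in a spherical shell cut by a slab *)

Definition dot (p q : Z3) : R :=
  match p, q with
  | (p1, p2, p3), (q1, q2, q3) => IZR p1 * IZR q1 + IZR p2 * IZR q2 + IZR p3 * IZR q3
  end.

Lemma dot_self_nonneg p : 0 <= dot p p.
Proof. destruct p as [[p1 p2] p3]. simpl. nra. Qed.

Lemma z3norm_dot p : z3norm p = sqrt (dot p p).
Proof. destruct p as [[p1 p2] p3]. simpl. f_equal. ring. Qed.

Lemma z3norm_nonneg p : 0 <= z3norm p.
Proof. rewrite z3norm_dot. apply sqrt_pos. Qed.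

Lemma z3norm_sq p : z3norm p ^ 2 = dot p p.
Proof. rewrite z3norm_dot. apply pow2_sqrt, dot_self_nonneg. Qed.

Lemma z3norm_sq_coords n1 n2 n3 :
  z3norm (n1, n2, n3) ^ 2 = IZR n1 ^ 2 + IZR n2 ^ 2 + IZR n3 ^ 2.
Proof. rewrite z3norm_sq. simpl. ring. Qed.

Lemma dot_z3add_self a n : dot (z3add a n) (z3add a n) = dot a a + 2 * dot a n + dot n n.
Proof. destruct a as [[a1 a2] a3], n as [[n1 n2] n3]. simpl. rewrite !plus_IZR. ring. Qed.

Lemma dot_le_z3norm_mul a n : dot a n <= z3norm a * z3norm n.
Proof.
  assert (Hcs : dot a n ^ 2 <= dot a a * dot n n).
  { destruct a as [[a1 a2] a3], n as [[n1 n2] n3]. simpl.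
    set (x1 := IZR a1); set (x2 := IZR a2); set (x3 := IZR a3).
    set (y1 := IZR n1); set (y2 := IZR n2); set (y3 := IZR n3).
    assert (Hlagrange : (x1 * x1 + x2 * x2 + x3 * x3) * (y1 * y1 + y2 * y2 + y3 * y3)
      - (x1 * y1 + x2 * y2 + x3 * y3) ^ 2
      = (x1 * y2 - x2 * y1) ^ 2 + (x1 * y3 - x3 * y1) ^ 2 + (x2 * y3 - x3 * y2) ^ 2) by ring.
    pose proof (pow2_ge_0 (x1 * y2 - x2 * y1)). pose proof (pow2_ge_0 (x1 * y3 - x3 * y1)).
    pose proof (pow2_ge_0 (x2 * y3 - x3 * y2)). lra. }
  rewrite !z3norm_dot, <- sqrt_mult_alt by apply dot_self_nonneg.
  destruct (Rle_dec (dot a n) 0); [pose proof (sqrt_pos (dot a a * dot n n)); lra|].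
  apply le_sqrt_of_sq_le; lra.
Qed.

Definition tilt (b1 b2 : R) (n : Z3) : R :=
  match n with (n1, n2, n3) => IZR n3 + b1 * IZR n1 + b2 * IZR n2 end.

Lemma shell_ellipse_bound R : 0 <= R ->
  16 * ((R + 2) ^ 2 - (R ^ 2 - 2 * R - 2)) + 4 * sqrt ((R + 2) ^ 2 - (R ^ 2 - 2 * R - 2))
  + 4 * sqrt ((R + 2) ^ 2) + 2 <= 122 * (R + 1).
Proof.
  intros HR. rewrite sqrt_pow2 by lra.
  assert (sqrt ((R + 2) ^ 2 - (R ^ 2 - 2 * R - 2)) <= 3 * R + 4)
    by (apply sqrt_le_of_le_sq; nra).
  lra.
Qed.

(* Fibre by the integer part [j] of [tilt n - t]: within a fibre [n3] is determined by
   [(n1, n2)], and writing [n3 = t + j - b1 n1 - b2 n2 + s] with [0 <= s < 1], the shell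
   condition puts [(n1, n2)] in an elliptic annulus of width [6 (R + 1)]. *)
Lemma card_at_most_shell_tilted_slab R b1 b2 t L :
  0 <= R -> -1 <= b2 <= 1 -> 0 <= L ->
  card_at_most (fun n : Z3 => R <= z3norm n <= R + 1 /\ t <= tilt b1 b2 n <= t + L)
    ((L + 1) * (122 * (R + 1))).
Proof.
  intros HR Hb2 HL.
  set (M := Z.to_nat (Int_part L)).
  assert (HM : INR M <= L).
  { unfold M. rewrite INR_IZR_INZ, Z2Nat.id by (apply le_Int_part; simpl; lra).
    apply Int_part_le. }
  eapply card_at_most_weaken; [intros n Hn; exact Hn | |].
  2:{ apply (card_at_most_fibers _ (fun n => Int_part (tilt b1 b2 n - t)) 0 M
               (fun j => 122 * (R + 1))).
      - intros n [_ Hn]. split; [apply le_Int_part; simpl; lra|].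
        unfold M. rewrite Z2Nat.id by (apply le_Int_part; simpl; lra).
        apply le_Int_part. pose proof (Int_part_le (tilt b1 b2 n - t)). lra.
      - intros j _.
        eapply card_at_most_weaken; [intros n Hn; exact Hn | apply shell_ellipse_bound, HR |].
        apply card_at_most_inj with (f := fst)
          (3 := card_at_most_ellipse_annulus b1 b2 (t + INR j)
                  (R ^ 2 - 2 * R - 2) ((R + 2) ^ 2) Hb2 ltac:(nra)).
        + intros [[n1 n2] n3] [[Hshell _] Hkey]. simpl in Hkey |- *.
          apply Int_part_eq_of_nat in Hkey.
          pose proof (z3norm_sq_coords n1 n2 n3).
          assert (R ^ 2 <= z3norm (n1, n2, n3) ^ 2 <= (R + 1) ^ 2) by (split; nra).
          assert (- (R + 1) <= IZR n3 <= R + 1) by (split; nra).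
          split; nra.
        + intros [[n1 n2] n3] [[n1' n2'] n3'] [_ Hk] [_ Hk'] E. simpl in E, Hk, Hk'.
          injection E as -> ->. f_equal. apply Z_eq_of_dist_lt_1.
          apply Int_part_eq_of_nat in Hk, Hk'. lra. }
  rewrite sum_cte, S_INR. pose proof (pos_INR M). nra.
Qed.

Definition shell_slab (a : Z3) (R t W : R) (n : Z3) : Prop :=
  R <= z3norm n <= R + 1 /\ t <= dot a n <= t + W.

Lemma slab_scale q t W : q <> 0 -> 0 <= W ->
  exists t', forall x, t <= x <= t + W -> t' <= x / q <= t' + W / Rabs q.
Proof.
  intros Hq HW. destruct (Rlt_dec 0 q) as [Hpos | Hneg].
  - exists (t / q). intros x Hx. rewrite Rabs_right by lra.
    replace (t / q + W / q) with ((t + W) / q) by (field; lra).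
    split; apply Rmult_le_compat_r; try (apply Rlt_le, Rinv_0_lt_compat); lra.
  - exists ((t + W) / q). intros x Hx. rewrite Rabs_left by lra.
    replace ((t + W) / q + W / - q) with (t / q) by (field; lra).
    assert (Hinv : / q < 0) by (apply Rinv_lt_0_compat; lra).
    unfold Rdiv. split; nra.
Qed.

Lemma z3norm_le_twice_dominant a1 a2 a3 :
  Rabs (IZR a1) <= Rabs (IZR a3) -> Rabs (IZR a2) <= Rabs (IZR a3) ->
  z3norm (a1, a2, a3) <= 2 * Rabs (IZR a3).
Proof.
  intros H1 H2. apply Rsqr_le_abs_1 in H1, H2. rewrite !Rsqr_pow2 in H1, H2.
  pose proof (z3norm_sq_coords a1 a2 a3). pose proof (z3norm_nonneg (a1, a2, a3)).
  pose proof (Rabs_pos (IZR a3)). pose proof (pow2_abs (IZR a3)).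
  nra.
Qed.

Lemma Rdiv_between_of_Rabs_le x y : y <> 0 -> Rabs x <= Rabs y -> -1 <= x / y <= 1.
Proof.
  intros Hy H. apply Rsqr_le_abs_1 in H. unfold Rsqr in H.
  assert (Hy2 : 0 < y * y) by nra.
  assert ((x / y) * (x / y) <= 1).
  { replace ((x / y) * (x / y)) with (x * x / (y * y)) by (field; auto).
    apply Rdiv_le_iff; lra. }
  split; nra.
Qed.

Lemma card_at_most_shell_slab_dominant a1 a2 a3 R t W :
  Rabs (IZR a1) <= Rabs (IZR a3) -> Rabs (IZR a2) <= Rabs (IZR a3) ->
  0 < z3norm (a1, a2, a3) -> 0 <= R -> 0 <= W ->
  card_at_most (shell_slab (a1, a2, a3) R t W)
    ((2 * W / z3norm (a1, a2, a3) + 1) * (122 * (R + 1))).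
Proof.
  intros H1 H2 Ha HR HW.
  pose proof (z3norm_le_twice_dominant a1 a2 a3 H1 H2) as Hdom.
  assert (Ha3 : IZR a3 <> 0) by (intro E; rewrite E, Rabs_R0 in Hdom; lra).
  set (b1 := IZR a1 / IZR a3). set (b2 := IZR a2 / IZR a3).
  assert (Htilt : forall n, tilt b1 b2 n = dot (a1, a2, a3) n / IZR a3)
    by (intros [[n1 n2] n3]; unfold b1, b2; simpl; field; assumption).
  destruct (slab_scale (IZR a3) t W Ha3 HW) as [t' Ht'].
  set (q := Rabs (IZR a3)) in *. set (z := z3norm (a1, a2, a3)) in *.
  eapply card_at_most_weaken; [| |
    apply (card_at_most_shell_tilted_slab R b1 b2 t' (W / q));
      [assumption | now apply Rdiv_between_of_Rabs_le | apply Rdiv_nonneg; lra]].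
  - intros n [Hshell Hslab]. rewrite Htilt. auto.
  - apply Rmult_le_compat_r; [lra|]. apply Rplus_le_compat_r.
    apply Rdiv_le_iff; [lra|].
    replace (2 * W / z * q) with (W * (2 * q / z)) by (field; lra).
    rewrite <- (Rmult_1_r W) at 1. apply Rmult_le_compat_l; [lra|].
    apply Rle_div_iff; lra.
Qed.

Definition swap13 (p : Z3) : Z3 := match p with (p1, p2, p3) => (p3, p2, p1) end.
Definition swap23 (p : Z3) : Z3 := match p with (p1, p2, p3) => (p1, p3, p2) end.

Lemma card_at_most_shell_slab_transport (sigma : Z3 -> Z3) a R t W K :
  (forall p q, dot (sigma p) (sigma q) = dot p q) -> (forall p, sigma (sigma p) = p) ->
  card_at_most (shell_slab (sigma a) R t W) K -> card_at_most (shell_slab a R t W) K.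
Proof.
  intros Hdot Hinv. apply card_at_most_inj with (f := sigma).
  - intros n [Hshell Hslab]. unfold shell_slab.
    rewrite z3norm_dot, Hdot, <- z3norm_dot, Hdot. auto.
  - intros p q _ _ E. now rewrite <- (Hinv p), E, Hinv.
Qed.

Lemma max3_cases x y z : (x <= z /\ y <= z) \/ (x <= y /\ z <= y) \/ (y <= x /\ z <= x).
Proof.
  destruct (Rle_dec x z), (Rle_dec y z), (Rle_dec x y);
    first [left; split; lra | right; left; split; lra | right; right; split; lra].
Qed.

Lemma card_at_most_shell_slab a R t W :
  0 < z3norm a -> 0 <= R -> 0 <= W ->
  card_at_most (shell_slab a R t W) ((2 * W / z3norm a + 1) * (122 * (R + 1))).
Proof.
  intros Ha HR HW. destruct a as [[a1 a2] a3].
  destruct (max3_cases (Rabs (IZR a1)) (Rabs (IZR a2)) (Rabs (IZR a3)))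
    as [[H1 H2] | [[H1 H3] | [H2 H3]]].
  - now apply card_at_most_shell_slab_dominant.
  - apply (card_at_most_shell_slab_transport swap23);
      [intros [[? ?] ?] [[? ?] ?]; simpl; ring | intros [[? ?] ?]; reflexivity |].
    replace (z3norm (a1, a2, a3)) with (z3norm (a1, a3, a2)) in *
      by (rewrite !z3norm_dot; simpl; f_equal; ring).
    now apply card_at_most_shell_slab_dominant.
  - apply (card_at_most_shell_slab_transport swap13);
      [intros [[? ?] ?] [[? ?] ?]; simpl; ring | intros [[? ?] ?]; reflexivity |].
    replace (z3norm (a1, a2, a3)) with (z3norm (a3, a2, a1)) in *
      by (rewrite !z3norm_dot; simpl; f_equal; ring).
    now apply card_at_most_shell_slab_dominant.
Qed.

(** * Counting shell by shell *)

Lemma card_at_most_by_shells (P : Z3 -> Prop) X B :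
  0 <= X -> (forall n, P n -> z3norm n <= X) ->
  (forall R, 0 <= R <= X -> card_at_most (fun n => P n /\ R <= z3norm n <= R + 1) B) ->
  card_at_most P ((X + 1) * B).
Proof.
  intros HX Hball Hshell.
  assert (HB : 0 <= B) by exact (card_at_most_nonneg _ _ (Hshell 0 (conj (Rle_refl 0) HX))).
  assert (HIX : (0 <= Int_part X)%Z) by (apply le_Int_part; simpl; lra).
  set (M := Z.to_nat (Int_part X)).
  assert (HM : INR M <= X)
    by (unfold M; rewrite INR_IZR_INZ, Z2Nat.id by lia; apply Int_part_le).
  eapply card_at_most_weaken; [intros n Hn; exact Hn | |].
  2:{ apply (card_at_most_fibers _ (fun n => Int_part (z3norm n)) 0 M (fun _ => B)).
      - intros n Hn. pose proof (z3norm_nonneg n). split; [apply le_Int_part; simpl; lra|].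
        unfold M. rewrite Z2Nat.id by lia. apply le_Int_part.
        pose proof (Int_part_le (z3norm n)). specialize (Hball n Hn). lra.
      - intros j Hj. apply le_INR in Hj. pose proof (pos_INR j).
        apply card_at_most_weaken with (2 := Rle_refl _) (3 := Hshell (INR j) ltac:(lra)).
        intros n [Hn Hk]. apply Int_part_eq_of_nat in Hk. split; [assumption | lra]. }
  rewrite sum_cte, S_INR. nra.
Qed.

Lemma card_at_most_shell R :
  0 <= R -> card_at_most (fun n => R <= z3norm n <= R + 1) ((2 * R + 3) * (122 * (R + 1))).
Proof.
  intros HR.
  replace (2 * R + 3) with ((2 * R + 2) + 1) by ring.
  apply card_at_most_weaken with (2 := Rle_refl _)
    (3 := card_at_most_shell_tilted_slab R 0 0 (- (R + 1)) (2 * R + 2) HR ltac:(lra) ltac:(lra)).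
  intros [[n1 n2] n3] Hn. split; [assumption|]. simpl.
  pose proof (z3norm_sq_coords n1 n2 n3). pose proof (z3norm_nonneg (n1, n2, n3)).
  split; nra.
Qed.

Lemma card_at_most_ball (P : Z3 -> Prop) X :
  0 <= X -> (forall n, P n -> z3norm n <= X) ->
  card_at_most P ((X + 1) * ((2 * X + 3) * (122 * (X + 1)))).
Proof.
  intros HX Hball. apply card_at_most_by_shells; [assumption .. |].
  intros R HR.
  eapply card_at_most_weaken; [intros n [_ Hn]; exact Hn | | apply card_at_most_shell; lra].
  apply Rmult_le_compat; nra.
Qed.

Lemma jbr_shell_window n R :
  0 <= R -> R <= z3norm n <= R + 1 -> sqrt (1 + R ^ 2) <= jbr n <= sqrt (1 + R ^ 2) + 1.
Proof.
  intros HR Hn. unfold jbr. split; [apply sqrt_le_1_alt; nra|].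
  assert (R <= sqrt (1 + R ^ 2)) by (apply le_sqrt_of_sq_le; lra).
  pose proof (pow2_sqrt (1 + R ^ 2) ltac:(nra)).
  apply sqrt_le_of_le_sq; nra.
Qed.

Lemma window_of_sum_window s m c' lo :
  s = 1 \/ s = -1 ->
  exists p, forall x y,
    lo <= y <= lo + 1 -> Rabs (x + s * y - m) <= c' -> p <= x <= p + (2 * c' + 1).
Proof.
  intros [-> | ->]; [exists (m - c' - lo - 1) | exists (m - c' + lo)];
    intros x y Hy Hxy; apply Rabs_le_between in Hxy; lra.
Qed.

Lemma dot_window_of_jbr_window a p w R :
  0 <= w -> 0 <= R ->
  exists t, forall n, R <= z3norm n <= R + 1 -> p <= jbr (z3add a n) <= p + w ->
    t <= dot a n <= t + (w * (z3norm a + R + 2) + R + 1 / 2).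
Proof.
  intros Hw HR. set (q := Rmax p 0).
  exists ((q ^ 2 - 1 - z3norm a ^ 2 - (R + 1) ^ 2) / 2).
  intros n Hn Hxi.
  pose proof (z3norm_nonneg a). pose proof (z3norm_nonneg n).
  set (xi := jbr (z3add a n)) in *.
  (* [2 a.n = xi^2 - 1 - |a|^2 - |n|^2], and [xi^2] exceeds [q^2] by at most [2 w xi]. *)
  assert (Hxi2 : xi ^ 2 = 1 + z3norm a ^ 2 + 2 * dot a n + z3norm n ^ 2).
  { unfold xi, jbr. rewrite pow2_sqrt by (pose proof (pow2_ge_0 (z3norm (z3add a n))); lra).
    rewrite !z3norm_sq, dot_z3add_self. ring. }
  assert (Hxi_le : xi <= z3norm a + z3norm n + 1).
  { apply sqrt_le_of_le_sq; [lra|].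
    rewrite z3norm_sq, dot_z3add_self, <- !z3norm_sq.
    pose proof (dot_le_z3norm_mul a n). nra. }
  assert (Hxi0 : 0 <= xi) by apply sqrt_pos.
  assert (Hq : 0 <= q <= xi /\ xi - q <= w) by (unfold q, Rmax; destruct (Rle_dec p 0); lra).
  assert (xi ^ 2 - q ^ 2 <= 2 * w * (z3norm a + R + 2)).
  { replace (xi ^ 2 - q ^ 2) with ((xi - q) * (xi + q)) by ring.
    apply Rle_trans with (w * (2 * xi)); [apply Rmult_le_compat; lra | nra]. }
  assert (q ^ 2 <= xi ^ 2) by nra.
  assert (R ^ 2 <= z3norm n ^ 2 <= (R + 1) ^ 2) by (split; nra).
  split; nra.
Qed.

Lemma card_at_most_level_set (P : Z3 -> Prop) a s m c' X :
  0 < z3norm a -> 0 <= c' -> 0 <= X -> s = 1 \/ s = -1 ->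
  (forall n, P n -> z3norm n <= X /\ Rabs (jbr (z3add a n) + s * jbr n - m) <= c') ->
  card_at_most P
    ((X + 1) * ((2 * ((2 * c' + 1) * (z3norm a + X + 2) + X + 1 / 2) / z3norm a + 1)
                * (122 * (X + 1)))).
Proof.
  intros Ha Hc' HX Hs HP.
  apply card_at_most_by_shells; [assumption | intros n Hn; apply HP, Hn |].
  intros R HR.
  destruct (window_of_sum_window s m c' (sqrt (1 + R ^ 2)) Hs) as [p Hp].
  destruct (dot_window_of_jbr_window a p (2 * c' + 1) R ltac:(lra) ltac:(lra)) as [t Ht].
  pose proof (z3norm_nonneg a).
  eapply card_at_most_weaken; [| | apply (card_at_most_shell_slab a R t
    ((2 * c' + 1) * (z3norm a + R + 2) + R + 1 / 2)); [assumption | lra | nra]].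
  - intros n [Hn Hshell]. split; [assumption|]. apply Ht; [assumption|].
    apply (Hp _ (jbr n)); [apply jbr_shell_window; lra | apply HP, Hn].
  - apply Rmult_le_compat; [| lra | | lra].
    + assert (0 <= 2 * ((2 * c' + 1) * (z3norm a + R + 2) + R + 1 / 2) / z3norm a)
        by (apply Rdiv_nonneg; nra).
      lra.
    + apply Rplus_le_compat_r. unfold Rdiv. apply Rmult_le_compat_r;
        [apply Rlt_le, Rinv_0_lt_compat; lra | nra].
Qed.

(** * Arithmetic of the final bound *)

Lemma sim_le_mul c x N : 1 <= c -> 1 <= N -> sim c x N -> x <= c * N.
Proof.
  intros Hc HN [H1 H2]. destruct (Req_dec N 1) as [-> | HN1].
  - rewrite Rmult_1_r. auto.
  - specialize (H2 HN1). lra.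
Qed.

Lemma one_add_div_le_div_Rmin A N : 1 <= A -> 1 <= N -> 1 + N / A <= 2 * N / Rmin A N.
Proof.
  intros HA HN. unfold Rmin. destruct (Rle_dec A N).
  - assert (1 <= N / A) by (apply Rle_div_iff; lra).
    replace (2 * N / A) with (2 * (N / A)) by (unfold Rdiv; ring). lra.
  - assert (N / A <= 1) by (apply Rdiv_le_iff; lra).
    replace (2 * N / N) with 2 by (field; lra). lra.
Qed.

Lemma ball_bound_le c c' N :
  1 <= c -> 0 <= c' -> 1 <= N ->
  (c * N + 1) * ((2 * (c * N) + 3) * (122 * (c * N + 1))) <= 12000 * c ^ 4 * (c' + 1) * N ^ 3.
Proof.
  intros Hc Hc' HN. set (X := c * N).
  assert (HX : 1 <= X) by (unfold X; nra).
  assert (H1 : (X + 1) * ((2 * X + 3) * (122 * (X + 1))) <= 2440 * X ^ 3).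
  { apply Rle_trans with ((2 * X) * ((5 * X) * (122 * (2 * X)))); [| right; ring].
    apply Rmult_le_compat; nra. }
  assert (H2 : X ^ 3 <= c ^ 4 * (c' + 1) * N ^ 3).
  { unfold X. rewrite Rpow_mult_distr.
    assert (1 <= c ^ 3) by (apply pow_R1_Rle; lra).
    assert (c ^ 3 <= c ^ 4 * (c' + 1)) by (simpl in *; nra).
    assert (0 < N ^ 3) by (apply pow_lt; lra). nra. }
  assert (0 <= X ^ 3) by (apply pow_le; lra).
  lra.
Qed.

Lemma slab_factor_le c' X alpha :
  0 <= c' -> 1 <= X -> 0 < alpha ->
  2 * ((2 * c' + 1) * (alpha + X + 2) + X + 1 / 2) / alpha + 1
  <= 12 * (c' + 1) * (1 + X / alpha).
Proof.
  intros Hc' HX Halpha.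
  replace (2 * ((2 * c' + 1) * (alpha + X + 2) + X + 1 / 2) / alpha + 1)
    with (4 * c' + 3 + ((4 * c' + 2) * (X + 2) + 2 * X + 1) / alpha) by (field; lra).
  assert (((4 * c' + 2) * (X + 2) + 2 * X + 1) / alpha <= (12 * c' + 9) * (X / alpha)).
  { unfold Rdiv. rewrite <- Rmult_assoc.
    apply Rmult_le_compat_r; [apply Rlt_le, Rinv_0_lt_compat |]; nra. }
  assert (0 <= X / alpha) by (apply Rdiv_nonneg; lra).
  nra.
Qed.

Lemma level_set_bound_le c c' N A alpha :
  1 <= c -> 0 <= c' -> 1 <= N -> 1 <= A -> A <= c * alpha ->
  (c * N + 1)
    * ((2 * ((2 * c' + 1) * (alpha + c * N + 2) + c * N + 1 / 2) / alpha + 1)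
       * (122 * (c * N + 1)))
  <= 12000 * c ^ 4 * (c' + 1) * / Rmin A N * N ^ 3.
Proof.
  intros Hc Hc' HN HA HAa. set (X := c * N).
  assert (HX : 1 <= X) by (unfold X; nra).
  assert (Halpha : 0 < alpha) by nra.
  set (F := 2 * ((2 * c' + 1) * (alpha + X + 2) + X + 1 / 2) / alpha + 1).
  assert (HF0 : 0 <= F).
  { assert (0 <= 2 * ((2 * c' + 1) * (alpha + X + 2) + X + 1 / 2) / alpha)
      by (apply Rdiv_nonneg; nra).
    unfold F. lra. }
  assert (HNA : 0 <= N / A) by (apply Rdiv_nonneg; lra).
  assert (HF : F <= 12 * c ^ 2 * (c' + 1) * (1 + N / A)).
  { assert (Hratio : X / alpha <= c ^ 2 * (N / A)).
    { apply Rdiv_le_iff; [lra|].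
      replace (c ^ 2 * (N / A) * alpha) with (X * (c * alpha / A)) by (unfold X; field; lra).
      rewrite <- (Rmult_1_r X) at 1. apply Rmult_le_compat_l; [lra|].
      apply Rle_div_iff; lra. }
    pose proof (slab_factor_le c' X alpha Hc' HX Halpha) as Hfactor. fold F in Hfactor.
    assert (1 <= c ^ 2) by (apply pow_R1_Rle; lra).
    assert (1 + X / alpha <= c ^ 2 * (1 + N / A)) by nra.
    nra. }
  assert (Hsq : (X + 1) * (122 * (X + 1)) <= 488 * c ^ 2 * N ^ 2).
  { replace (488 * c ^ 2 * N ^ 2) with (488 * X ^ 2) by (unfold X; ring). nra. }
  assert (Hmin : 0 < Rmin A N) by (apply Rmin_glb_lt; lra).
  pose proof (one_add_div_le_div_Rmin A N HA HN).
  apply Rle_trans with (12 * c ^ 2 * (c' + 1) * (2 * N / Rmin A N) * (488 * c ^ 2 * N ^ 2)).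
  { replace ((X + 1) * (F * (122 * (X + 1)))) with (F * ((X + 1) * (122 * (X + 1)))) by ring.
    apply Rmult_le_compat; [assumption | nra | | assumption].
    apply Rle_trans with (1 := HF). apply Rmult_le_compat_l; [nra | assumption]. }
  assert (0 <= c ^ 4 * (c' + 1) * / Rmin A N * N ^ 3).
  { apply Rmult_le_pos; [apply Rdiv_nonneg; nra | apply pow_le; lra]. }
  replace (12 * c ^ 2 * (c' + 1) * (2 * N / Rmin A N) * (488 * c ^ 2 * N ^ 2))
    with (11712 * (c ^ 4 * (c' + 1) * / Rmin A N * N ^ 3)) by (field; lra).
  lra.
Qed.

Theorem lemma4p15 :
  forall c c' : R, 1 <= c -> 0 < c' ->
  exists C : R, 0 < C /\
    forall (a : Z3) (A N : R) (s : R),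
      1 <= A -> 1 <= N -> sim c (z3norm a) A -> (s = 1 \/ s = -1) ->
      forall m : Z,
        card_le (fun n : Z3 => sim c (z3norm n) N /\
                   Rabs (jbr (z3add a n) + s * jbr n - IZR m) <= c')
                (C * / Rmin A N * N ^ 3).
Proof.
  intros c c' Hc Hc'.
  exists (12000 * c ^ 4 * (c' + 1)). split.
  { pose proof (pow_R1_Rle c 4 Hc). nra. }
  intros a A N s HA HN HaA Hs m.
  assert (HcN : 1 <= c * N) by nra.
  destruct (Req_dec A 1) as [-> | HA1].
  - rewrite (Rmin_left 1 N HN), Rinv_1, Rmult_1_r.
    eapply card_at_most_weaken; [intros n Hn; exact Hn | apply ball_bound_le; lra |].
    apply card_at_most_ball; [lra|]. intros n [Hn _]. now apply (sim_le_mul c _ N).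
  - destruct HaA as [_ HaA]. specialize (HaA HA1).
    assert (HAa : A <= c * z3norm a).
    { rewrite Rmult_comm. apply Rdiv_le_iff; [lra|]. unfold Rdiv. lra. }
    eapply card_at_most_weaken;
      [intros n Hn; exact Hn | apply (level_set_bound_le c c' N A (z3norm a)); lra |].
    apply card_at_most_level_set with (s := s) (m := IZR m); [nra | lra | lra | assumption |].
    intros n [Hn Hlevel]. split; [now apply (sim_le_mul c _ N) | assumption].
Qed.
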